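(* Let $a\in\mathbb{R}$, $h>0$, $b=a+kh$ with $k\ge2$, $\mathbb{T}=\{a,a+h,\dots,b\}$, and let $L(t,u,v):\mathbb{T}^\kappa\times\mathbb{R}^2\to\mathbb{R}$ have continuous second partial derivatives in $(u,v)$. If $\hat y$ is a local minimizer of $$\mathcal{L}(y)=\int_a^bL(t,y(\sigma(t)),y^\Delta(t))\Delta t\to\min,\qquad y(a)=A,\ y(b)=B,$$ (local with respect to the norm $\|y\|=\max_{\mathbb{T}^\kappa}|y(\sigma(t))|+\max_{\mathbb{T}^\kappa}|y^\Delta(t)|$), then for all $t\in\mathbb{T}^{\kappa^2}$, $$h^2L_{uu}[\hat y](t)+2hL_{uv}[\hat y](t)+L_{vv}[\hat y](t)+L_{vv}[\hat y](\sigma(t))\ge0,$$ where $[\hat y](t)=(t,\hat y(\sigma(t)),\hat y^\Delta(t))$.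
   Context: $\mathbb{T}^\kappa=\mathbb{T}\setminus\{b\}$, $\mathbb{T}^{\kappa^2}=\mathbb{T}\setminus\{b-h,b\}$, $\sigma(t)=t+h$, $y^\Delta(t)=(y(t+h)-y(t))/h$, and $\int_a^bG(t)\Delta t:=h\sum_{j=0}^{k-1}G(a+jh)$. A function $\hat y$ with $\hat y(a)=A$, $\hat y(b)=B$ is a local minimizer if there is $\delta>0$ such that $\mathcal{L}(\hat y)\le\mathcal{L}(y)$ for all $y:\mathbb{T}\to\mathbb{R}$ with $y(a)=A$, $y(b)=B$ and $\|y-\hat y\|<\delta$. *)

From Stdlib Require Import Reals Lra.
Open Scope R_scope.

Definition tpt (a h : R) (j : nat) : R := a + INR j * h.

Definition sgm (h t : R) : R := t + h.
Definition delta_deriv (h : R) (y : R -> R) (t : R) : R := (y (sgm h t) - y t) / h.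

Fixpoint rsum (f : nat -> R) (n : nat) : R :=
  match n with O => 0 | S m => rsum f m + f m end.

(* max_{j=0}^{n-1} f j  (0 for n = 0; used only with nonnegative f and n >= 2) *)
Fixpoint rmaxn (f : nat -> R) (n : nat) : R :=
  match n with O => 0 | S m => Rmax (rmaxn f m) (f m) end.

(* delta integral over [a,b) with b = a + k h:  h * sum_{j<k} G(a+jh) *)
Definition delta_int (a h : R) (k : nat) (G : R -> R) : R :=
  h * rsum (fun j => G (tpt a h j)) k.

Definition functional (a h : R) (k : nat) (L : R -> R -> R -> R) (y : R -> R) : R :=
  delta_int a h k (fun t => L t (y (sgm h t)) (delta_deriv h y t)).

Definition ynorm (a h : R) (k : nat) (y : R -> R) : R :=
  rmaxn (fun j => Rabs (y (sgm h (tpt a h j)))) k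
  + rmaxn (fun j => Rabs (delta_deriv h y (tpt a h j))) k.

Definition local_minimizer (a h : R) (k : nat) (L : R -> R -> R -> R)
  (A B : R) (yh : R -> R) : Prop :=
  yh a = A /\ yh (tpt a h k) = B /\
  exists delta, 0 < delta /\
    forall y : R -> R, y a = A -> y (tpt a h k) = B ->
      ynorm a h k (fun t => y t - yh t) < delta ->
      functional a h k L yh <= functional a h k L y.

Definition continuous2 (f : R -> R -> R) : Prop :=
  forall u v eps, 0 < eps -> exists d, 0 < d /\
    forall u' v', Rabs (u' - u) < d -> Rabs (v' - v) < d ->
      Rabs (f u' v' - f u v) < eps.

(* Fix an interior grid point t_{j+1}.  Perturbing the minimizer yh by
   e times the indicator of t_{j+1} keeps the endpoints, is small in the
   norm ||.|| when e is small, and changes the functional only in the two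
   summands indexed by t_j and t_{j+1}.  Hence the one-variable function
     psi(e) = L(t_j, U + e, V + e/h) + L(t_{j+1}, U', V' - e/h)
   has a local minimum at e = 0.  Each summand is the restriction of a C^2
   function of (u,v) to a line, so psi is twice differentiable and the
   second-order condition psi''(0) >= 0 gives, after multiplying by h^2,
   exactly the claimed inequality (the mixed partials agree by Schwarz). *)
From Stdlib Require Import Reals Lra Lia FunctionalExtensionality.
From Coquelicot Require Import Coquelicot.
Open Scope R_scope.

Definition has_partials (f fu fv : R -> R -> R) : Prop :=
  (forall u v, derivable_pt_lim (fun u' => f u' v) u (fu u v)) /\
  (forall u v, derivable_pt_lim (fun v' => f u v') v (fv u v)).

Definition C1_with (f fu fv : R -> R -> R) : Prop :=
  has_partials f fu fv /\ continuous2 fu /\ continuous2 fv.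

Definition C2_with (f fu fv fuu fuv fvu fvv : R -> R -> R) : Prop :=
  has_partials f fu fv /\ C1_with fu fuu fuv /\ C1_with fv fvu fvv.

Lemma MVT_unordered (f f' : R -> R) x y :
  (forall c, derivable_pt_lim f c (f' c)) ->
  exists c, f y - f x = f' c * (y - x) /\ Rabs (c - x) <= Rabs (y - x).
Proof.
  intros Hd. destruct (Rtotal_order x y) as [Hxy | [-> | Hxy]].
  - destruct (MVT_cor2 f f' x y Hxy (fun c _ => Hd c)) as [c [E Hc]].
    exists c; split; [exact E |]. rewrite !Rabs_right; lra.
  - exists y. split; [ring | lra].
  - destruct (MVT_cor2 f f' y x Hxy (fun c _ => Hd c)) as [c [E Hc]].
    exists c; split; [lra |]. rewrite !Rabs_left; lra.
Qed.

Lemma C1_differentiable f fu fv :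
  C1_with f fu fv -> forall x y, differentiable_pt_lim f x y (fu x y) (fv x y).
Proof.
  intros [[Hu Hv] [Cu Cv]] x y [eps Heps]; simpl.
  destruct (Cu x y (eps / 2)) as [d1 [Hd1 P1]]; [lra |].
  destruct (Cv x y (eps / 2)) as [d2 [Hd2 P2]]; [lra |].
  exists (mkposreal _ (Rmin_glb_lt _ _ _ Hd1 Hd2)); simpl. intros u v Hux Hvy.
  pose proof (Rmin_l d1 d2); pose proof (Rmin_r d1 d2).
  destruct (MVT_unordered (fun u' => f u' v) (fun u' => fu u' v) x u (fun c => Hu c v))
    as [c [E1 B1]].
  destruct (MVT_unordered (fun v' => f x v') (fun v' => fv x v') y v (fun c => Hv x c))
    as [c' [E2 B2]].
  simpl in E1, E2.
  replace (f u v - f x y - (fu x y * (u - x) + fv x y * (v - y)))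
    with ((fu c v - fu x y) * (u - x) + (fv x c' - fv x y) * (v - y)) by lra.
  assert (A1 : Rabs (fu c v - fu x y) < eps / 2) by (apply P1; lra).
  assert (A2 : Rabs (fv x c' - fv x y) < eps / 2)
    by (apply P2; [rewrite Rminus_diag, Rabs_R0 |]; lra).
  pose proof (Rmax_l (Rabs (u - x)) (Rabs (v - y))).
  pose proof (Rmax_r (Rabs (u - x)) (Rabs (v - y))).
  pose proof (Rabs_pos (u - x)); pose proof (Rabs_pos (v - y)).
  eapply Rle_trans; [apply Rabs_triang |]. rewrite !Rabs_mult.
  pose proof (Rabs_pos (fu c v - fu x y)); pose proof (Rabs_pos (fv x c' - fv x y)).
  nra.
Qed.

Lemma differentiable_continuous2 f fu fv :
  (forall x y, differentiable_pt_lim f x y (fu x y) (fv x y)) -> continuous2 f.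
Proof.
  intros Hd u v eps Heps.
  assert (C : continuity_2d_pt f u v).
  { apply differentiable_continuity_pt. exists (fu u v), (fv u v). apply Hd. }
  destruct (C (mkposreal eps Heps)) as [d Hcd].
  exists d. split; [apply cond_pos | intros; apply Hcd; auto].
Qed.

Lemma C2_C1 f fu fv fuu fuv fvu fvv :
  C2_with f fu fv fuu fuv fvu fvv -> C1_with f fu fv.
Proof.
  intros [Hp [Hu Hv]]. split; [exact Hp |].
  split; eapply differentiable_continuous2; apply C1_differentiable; eassumption.
Qed.

Lemma continuous2_2d (f : R -> R -> R) x y : continuous2 f -> continuity_2d_pt f x y.
Proof.
  intros C eps. destruct (C x y eps (cond_pos eps)) as [d [Hd P]].
  exists (mkposreal d Hd). intros; apply P; auto.
Qed.

Lemma C2_mixed_partials f fu fv fuu fuv fvu fvv :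
  C2_with f fu fv fuu fuv fvu fvv -> forall x y, fuv x y = fvu x y.
Proof.
  intros [[Hu Hv] [[[_ Huv] [_ Cuv]] [[Hvu _] [Cvu _]]]] x y.
  assert (Ev : forall v, (fun z => Derive (fun t => f z t) v) = (fun z => fv z v)).
  { intro v; apply functional_extensionality; intro z.
    apply is_derive_unique, is_derive_Reals, Hv. }
  assert (Eu : forall u, (fun z => Derive (fun t => f t z) u) = (fun z => fu u z)).
  { intro u; apply functional_extensionality; intro z.
    apply is_derive_unique, is_derive_Reals, Hu. }
  assert (S := Schwarz f x y). rewrite Ev, Eu in S.
  rewrite (is_derive_unique _ _ _ (proj2 (is_derive_Reals _ _ _) (Hvu x y))),
          (is_derive_unique _ _ _ (proj2 (is_derive_Reals _ _ _) (Huv x y))) in S.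
  symmetry; apply S.
  - exists (mkposreal 1 Rlt_0_1). intros u v _ _. rewrite Ev, Eu.
    repeat split; eexists; apply is_derive_Reals; auto.
  - apply continuity_2d_pt_ext with (f := fvu); [| now apply continuous2_2d].
    intros u v. rewrite Ev. symmetry. apply is_derive_unique, is_derive_Reals, Hvu.
  - apply continuity_2d_pt_ext with (f := fuv); [| now apply continuous2_2d].
    intros u v. rewrite Eu. symmetry. apply is_derive_unique, is_derive_Reals, Huv.
Qed.

Lemma affine_deriv U p x : derivable_pt_lim (fun e => U + e * p) x p.
Proof. apply is_derive_Reals. auto_derive; [easy | ring]. Qed.

Lemma deriv_mul_const (f : R -> R) x l c :
  derivable_pt_lim f x l -> derivable_pt_lim (fun y => f y * c) x (l * c).
Proof.
  intros Hf. apply is_derive_Reals.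
  apply (is_derive_scal_l f x l c), is_derive_Reals, Hf.
Qed.

Lemma line_deriv f fu fv U V p q e :
  C1_with f fu fv ->
  derivable_pt_lim (fun e => f (U + e * p) (V + e * q)) e
    (fu (U + e * p) (V + e * q) * p + fv (U + e * p) (V + e * q) * q).
Proof.
  intros Hf. apply derivable_pt_lim_comp_2d;
    [apply C1_differentiable; exact Hf | apply affine_deriv | apply affine_deriv].
Qed.

Definition second_deriv_at0 (psi : R -> R) (c : R) : Prop :=
  exists d1, (forall s, derivable_pt_lim psi s (d1 s)) /\ derivable_pt_lim d1 0 c.

Lemma second_deriv_plus (f g : R -> R) cf cg :
  second_deriv_at0 f cf -> second_deriv_at0 g cg ->
  second_deriv_at0 (fun e => f e + g e) (cf + cg).
Proof.
  intros [df [Hf Hdf]] [dg [Hg Hdg]]. exists (fun s => df s + dg s).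
  split; [intro s |]; apply derivable_pt_lim_plus; auto.
Qed.

Lemma line_second_deriv f fu fv fuu fuv fvu fvv U V p q :
  C2_with f fu fv fuu fuv fvu fvv ->
  second_deriv_at0 (fun e => f (U + e * p) (V + e * q))
    (fuu U V * p ^ 2 + 2 * fuv U V * p * q + fvv U V * q ^ 2).
Proof.
  intros Hf. assert (Hsym := C2_mixed_partials _ _ _ _ _ _ _ Hf U V).
  exists (fun e => fu (U + e * p) (V + e * q) * p + fv (U + e * p) (V + e * q) * q).
  split; [intro s; apply line_deriv; eapply C2_C1; exact Hf |].
  destruct Hf as [_ [Hu Hv]].
  assert (D : derivable_pt_lim
    (fun e => fu (U + e * p) (V + e * q) * p + fv (U + e * p) (V + e * q) * q) 0
    ((fuu (U + 0 * p) (V + 0 * q) * p + fuv (U + 0 * p) (V + 0 * q) * q) * p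
     + (fvu (U + 0 * p) (V + 0 * q) * p + fvv (U + 0 * p) (V + 0 * q) * q) * q)).
  { apply derivable_pt_lim_plus; apply deriv_mul_const, line_deriv; assumption. }
  rewrite !Rmult_0_l, !Rplus_0_r, <- Hsym in D.
  replace (fuu U V * p ^ 2 + 2 * fuv U V * p * q + fvv U V * q ^ 2) with
    ((fuu U V * p + fuv U V * q) * p + (fuv U V * p + fvv U V * q) * q) by ring.
  exact D.
Qed.

Lemma second_order_min (psi : R -> R) c r :
  0 < r -> (forall s, Rabs s < r -> psi 0 <= psi s) -> second_deriv_at0 psi c -> 0 <= c.
Proof.
  intros Hr Hmin [d1 [Hd Hc]].
  assert (Hcrit : d1 0 = 0).
  { pose (pr := exist (fun l => derivable_pt_abs psi 0 l) (d1 0) (Hd 0)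
                 : derivable_pt psi 0).
    apply (deriv_minimum psi (-r) r 0 pr); try lra.
    intros x H1 H2. apply Hmin, Rabs_def1; lra. }
  destruct (Rle_or_lt 0 c) as [| Hneg]; [assumption | exfalso].
  destruct (Hc (- c / 2)) as [[d Hdpos] Hdd]; [lra |]; simpl in Hdd.
  set (s := Rmin r d / 2).
  assert (Hs : 0 < s < r /\ s < d).
  { pose proof (Rmin_glb_lt r d 0 Hr Hdpos); pose proof (Rmin_l r d);
    pose proof (Rmin_r r d); unfold s; lra. }
  (* psi decreases on [0, s] since d1 < 0 on (0, s) *)
  destruct (MVT_cor2 psi d1 0 s ltac:(lra) (fun c _ => Hd c)) as [th [E Hth]].
  assert (Hneg_th : d1 th < 0).
  { specialize (Hdd th ltac:(lra) ltac:(rewrite Rabs_right; lra)).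
    rewrite Rplus_0_l, Hcrit, Rminus_0_r in Hdd.
    apply Rabs_def2 in Hdd.
    assert (d1 th = (d1 th / th) * th) by (field; lra). nra. }
  specialize (Hmin s ltac:(rewrite Rabs_right; lra)). nra.
Qed.

Lemma sgm_tpt a h i : sgm h (tpt a h i) = tpt a h (S i).
Proof. unfold sgm, tpt. rewrite S_INR. ring. Qed.

Lemma tpt_inj a h m n : 0 < h -> tpt a h m = tpt a h n -> m = n.
Proof.
  intros Hh E. unfold tpt in E. apply INR_eq, (Rmult_eq_reg_r h); lra.
Qed.

Lemma rsum_ext f g n : (forall i, f i = g i) -> rsum f n = rsum g n.
Proof. intros H; induction n; simpl; [reflexivity | now rewrite IHn, H]. Qed.

Lemma rsum_minus f g n : rsum f n - rsum g n = rsum (fun i => f i - g i) n.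
Proof. induction n; simpl; [ring | rewrite <- IHn; ring]. Qed.

Lemma rsum_vanish f n : (forall i, (i < n)%nat -> f i = 0) -> rsum f n = 0.
Proof.
  induction n; intros H; simpl; [reflexivity |].
  rewrite IHn, H; [ring | lia | intros i Hi; apply H; lia].
Qed.

Lemma rsum_two f j n :
  (S j < n)%nat -> (forall i, i <> j -> i <> S j -> f i = 0) ->
  rsum f n = f j + f (S j).
Proof.
  intros Hjn H. induction n as [| m IH]; [lia |].
  destruct (Nat.eq_dec m (S j)) as [-> | Hm].
  - simpl. rewrite (rsum_vanish f j) by (intros i Hi; apply H; lia). ring.
  - simpl. rewrite IH, (H m) by lia. ring.
Qed.

Lemma functional_grid a h k L y :
  functional a h k L y = h * rsum (fun i => L (tpt a h i) (y (tpt a h (S i)))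
     ((y (tpt a h (S i)) - y (tpt a h i)) / h)) k.
Proof.
  unfold functional, delta_int, delta_deriv. f_equal.
  apply rsum_ext. intro i. now rewrite sgm_tpt.
Qed.

Lemma rmaxn_le f n M : 0 <= M -> (forall i, f i <= M) -> rmaxn f n <= M.
Proof. intros H0 H; induction n; simpl; [assumption | now apply Rmax_lub]. Qed.

Lemma ynorm_le a h k eta c c' :
  0 < h -> 0 <= c -> 0 <= c' ->
  (forall s, Rabs (eta s) <= c) -> (forall s, Rabs (eta (sgm h s) - eta s) <= c') ->
  ynorm a h k eta <= c + c' / h.
Proof.
  intros Hh Hc Hc' Hbd Hinc. unfold ynorm.
  apply Rplus_le_compat; apply rmaxn_le; auto.
  - apply Rdiv_le_0_compat; lra.
  - intro i. unfold delta_deriv, Rdiv.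
    rewrite Rabs_mult, Rabs_inv, (Rabs_right h) by lra.
    apply Rmult_le_compat_r; [left; apply Rinv_0_lt_compat; lra | apply Hinc].
Qed.

Definition bump (s0 s : R) : R := if Req_EM_T s s0 then 1 else 0.

Lemma bump_cases s0 s : bump s0 s = 0 \/ bump s0 s = 1.
Proof. unfold bump; destruct Req_EM_T; auto. Qed.

Lemma bump_grid a h n m : 0 < h ->
  bump (tpt a h n) (tpt a h m) = if Nat.eq_dec m n then 1 else 0.
Proof.
  intros Hh. unfold bump. destruct Req_EM_T as [E | E], Nat.eq_dec as [E' | E'];
    [reflexivity | exfalso; apply E', (tpt_inj a h); assumption
    | exfalso; apply E; now subst | reflexivity].
Qed.

(* The two summands of the functional that see the perturbation of yh at
   t_{j+1} by e: both are restrictions of L(t, ., .) to a line in (u,v). *)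
Definition bump_cost (a h : R) (L : R -> R -> R -> R) (yh : R -> R) (j : nat)
  (e : R) : R :=
  L (tpt a h j) (yh (tpt a h (S j)) + e * 1)
    ((yh (tpt a h (S j)) - yh (tpt a h j)) / h + e * / h)
  + L (tpt a h (S j)) (yh (tpt a h (S (S j))) + e * 0)
    ((yh (tpt a h (S (S j))) - yh (tpt a h (S j))) / h + e * - / h).

Lemma functional_bump a h k L yh j e :
  0 < h -> (S j < k)%nat ->
  functional a h k L (fun s => yh s + e * bump (tpt a h (S j)) s)
  - functional a h k L yh = h * (bump_cost a h L yh j e - bump_cost a h L yh j 0).
Proof.
  intros Hh Hjk. rewrite !functional_grid, <- Rmult_minus_distr_l. f_equal.
  rewrite rsum_minus, (rsum_two _ j) by
    (trivial; intros i Hi Hi'; cbv beta; rewrite !bump_grid by exact Hh;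
     do 2 (destruct Nat.eq_dec; [lia |]); rewrite !Rmult_0_r, !Rplus_0_r; ring).
  cbv beta. rewrite !bump_grid by exact Hh.
  repeat (destruct Nat.eq_dec; try lia). unfold bump_cost.
  replace ((yh (tpt a h (S j)) + e * 1 - (yh (tpt a h j) + e * 0)) / h)
    with ((yh (tpt a h (S j)) - yh (tpt a h j)) / h + e * / h) by (field; lra).
  replace ((yh (tpt a h (S (S j))) + e * 0 - (yh (tpt a h (S j)) + e * 1)) / h)
    with ((yh (tpt a h (S (S j))) - yh (tpt a h (S j))) / h + e * - / h) by (field; lra).
  rewrite !Rmult_0_l, !Rmult_0_r, !Rplus_0_r. ring.
Qed.

Lemma local_min_bump a h k L A B yh j :
  0 < h -> (S j < k)%nat -> local_minimizer a h k L A B yh ->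
  exists r, 0 < r /\ forall e, Rabs e < r ->
    functional a h k L yh <= functional a h k L (fun s => yh s + e * bump (tpt a h (S j)) s).
Proof.
  intros Hh Hjk [HA [HB [delta [Hdelta Hmin]]]].
  exists (delta * h / (h + 1)). split; [apply Rdiv_lt_0_compat; nra |].
  intros e He. apply Hmin.
  - replace a with (tpt a h 0) at 3 by (unfold tpt; simpl; ring).
    rewrite bump_grid by exact Hh. destruct Nat.eq_dec; [lia | lra].
  - rewrite bump_grid by exact Hh. destruct Nat.eq_dec; [lia | lra].
  - apply Rle_lt_trans with (Rabs e + Rabs e / h).
    + apply ynorm_le; auto using Rabs_pos; intro s;
        destruct (bump_cases (tpt a h (S j)) s) as [-> | ->];
        try destruct (bump_cases (tpt a h (S j)) (sgm h s)) as [-> | ->];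
        match goal with |- Rabs ?x <= _ => ring_simplify x end;
        rewrite ?Rabs_R0, ?Rabs_Ropp; auto using Rabs_pos, Rle_refl.
    + assert (Hx : Rabs e * (h + 1) < delta * h).
      { apply (Rmult_lt_compat_r (h + 1)) in He; [| lra].
        replace (delta * h / (h + 1) * (h + 1)) with (delta * h) in He by (field; lra).
        exact He. }
      apply (Rmult_lt_reg_r h); [lra |].
      replace ((Rabs e + Rabs e / h) * h) with (Rabs e * (h + 1)) by (field; lra).
      exact Hx.
Qed.

Theorem mainTheorem13
  (a h : R) (k : nat) (A B : R)
  (L Lu Lv Luu Luv Lvu Lvv : R -> R -> R -> R) (yh : R -> R) :
  0 < h -> (2 <= k)%nat ->
  (* on T^kappa: L(t,.,.) has continuous second partial derivatives in (u,v) *)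
  (forall j, (j < k)%nat -> let t := tpt a h j in
     (forall u v, derivable_pt_lim (fun u' => L t u' v) u (Lu t u v)) /\
     (forall u v, derivable_pt_lim (fun v' => L t u v') v (Lv t u v)) /\
     (forall u v, derivable_pt_lim (fun u' => Lu t u' v) u (Luu t u v)) /\
     (forall u v, derivable_pt_lim (fun v' => Lu t u v') v (Luv t u v)) /\
     (forall u v, derivable_pt_lim (fun u' => Lv t u' v) u (Lvu t u v)) /\
     (forall u v, derivable_pt_lim (fun v' => Lv t u v') v (Lvv t u v)) /\
     continuous2 (Luu t) /\ continuous2 (Luv t) /\
     continuous2 (Lvu t) /\ continuous2 (Lvv t)) ->
  local_minimizer a h k L A B yh ->
  forall j, (j < k - 1)%nat ->
    let t := tpt a h j in
    let ys := fun s => yh (sgm h s) in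
    let yd := fun s => delta_deriv h yh s in
    h ^ 2 * Luu t (ys t) (yd t) + 2 * h * Luv t (ys t) (yd t)
    + Lvv t (ys t) (yd t)
    + Lvv (sgm h t) (ys (sgm h t)) (yd (sgm h t)) >= 0.
Proof.
  intros Hh Hk Hsmooth Hloc j Hj. cbv zeta. unfold delta_deriv. rewrite !sgm_tpt.
  assert (HC2 : forall i, (i < k)%nat ->
    C2_with (L (tpt a h i)) (Lu (tpt a h i)) (Lv (tpt a h i)) (Luu (tpt a h i))
            (Luv (tpt a h i)) (Lvu (tpt a h i)) (Lvv (tpt a h i))).
  { intros i Hi. destruct (Hsmooth i Hi) as (? & ? & ? & ? & ? & ? & ? & ? & ? & ?).
    repeat split; assumption. }
  destruct (local_min_bump a h k L A B yh j Hh ltac:(lia) Hloc) as [r [Hr Hmin]].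
  assert (Hpsi : forall e, Rabs e < r -> bump_cost a h L yh j 0 <= bump_cost a h L yh j e).
  { intros e He. specialize (Hmin e He).
    pose proof (functional_bump a h k L yh j e Hh ltac:(lia)). nra. }
  pose proof (HC2 j ltac:(lia)) as HC2_t0; pose proof (HC2 (S j) ltac:(lia)) as HC2_t1.
  set (t0 := tpt a h j) in *; set (t1 := tpt a h (S j)) in *;
  set (t2 := tpt a h (S (S j))) in *.
  set (V1 := (yh t1 - yh t0) / h); set (V2 := (yh t2 - yh t1) / h).
  (* their second derivative at 0 is h^-2 times the left-hand side *)
  assert (Hsecond := second_deriv_plus _ _ _ _
    (line_second_deriv _ _ _ _ _ _ _ (yh t1) V1 1 (/ h) HC2_t0)
    (line_second_deriv _ _ _ _ _ _ _ (yh t2) V2 0 (- / h) HC2_t1)).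
  pose proof (second_order_min _ _ r Hr Hpsi Hsecond) as Hc.
  apply (Rmult_le_pos (h ^ 2)) in Hc; [apply Rle_ge | apply pow_le; lra].
  eapply Rle_trans; [exact Hc | right; field; lra].
Qed.
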